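(* Let $X$ be an $n$-dimensional real Banach space and let $A \subset X$ be a bounded set not containing the zero vector, such that for every non-zero $x \in X$ there exists $r_x > 0$ with $r_x x \in A$. Then: (i) every ball-covering of $A$ contains at least $n+1$ balls; (ii) if, in addition, $X$ is smooth and $d(0, A) > 0$, then $A$ admits a ball-covering consisting of $n+1$ balls.
   Context: A ball-covering of a set $A \subset X$ is a collection of open balls $B(c, r) = \{ z : \|c - z\| < r\}$, none containing the zero vector (i.e. $0 < r \le \|c\|$), whose union contains $A$. $X$ is smooth if every non-zero $x \in X$ has a unique $f \in S_{X^*}$ with $f(x) = \|x\|$. $d(0,A) = \inf\{\|a\|: a \in A\}$. *)

From HB Require Import structures.
From mathcomp Require Import all_boot all_order all_algebra.
From mathcomp Require Import all_classical all_reals all_analysis.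
Set Implicit Arguments. Unset Strict Implicit. Unset Printing Implicit Defensive.
Import Order.TTheory GRing.Theory Num.Theory.
Import numFieldNormedType.Exports.
Local Open Scope classical_set_scope.
Local Open Scope ring_scope.

Section Defs.
Variables (R : realType) (X : normedModType R).

Definition is_dim (n : nat) : Prop :=
  exists f : 'rV[R]_n -> X,
    (forall (a : R) u v, f (a *: u + v) = a *: f u + f v) /\ bijective f.

Definition oball (c : X) (r : R) : set X := [set z | `|c - z| < r].

(* a ball-covering of A: a collection of open balls, none containing 0
   (0 < r <= ||c||), whose union contains A *)
Definition ball_covering (A : set X) (C : set (set X)) : Prop :=
  (forall B, C B -> exists c r, 0 < r /\ r <= `|c| /\ B = oball c r) /\
  A `<=` \bigcup_(B in C) B.

Definition dual_unit (f : X -> R) : Prop :=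
  (forall (a : R) u v, f (a *: u + v) = a * f u + f v) /\
  continuous f /\
  sup [set `|f x| | x in [set x : X | `|x| <= 1]] = 1.

Definition smooth : Prop :=
  forall x : X, x != 0 ->
    exists f, dual_unit f /\ f x = `|x| /\
      (forall g, dual_unit g -> g x = `|x| -> g =1 f).

Definition dist0 (A : set X) : R := inf [set `|a| | a in A].

Definition norm_bounded (A : set X) : Prop :=
  exists M : R, forall a, A a -> `|a| <= M.

End Defs.

(* Work in coordinates: X is R^n with the transported norm N.
   (i) A ball B(c, r) with r <= ||c|| is convex and misses 0, so it lies in an
   open half-space {v > 0}.  Any n linear forms on R^n are simultaneously <= 0
   on some nonzero u; the ray through u meets A but none of the n half-spaces,
   so n balls never cover A.
   (ii) The n + 1 vectors e_1, ..., e_n, -(e_1 + ... + e_n) positively span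
   R^n.  Let xi_i be a unit vector where a_i, the i-th of them, attains its dual
   norm.  By smoothness a_i / a_i(xi_i) is the only norming functional at xi_i,
   which forces N(xi_i - s u) < 1 for small s > 0 whenever a_i(u) > 0.  Hence the
   balls B(T xi_i, T), increasing in T, exhaust R^n \ {0}, and by compactness
   of {d(0, A) <= N <= sup N(A)} one T suffices; radii T + i + 1 keep the n + 1
   balls distinct. *)

From HB Require Import structures.
From mathcomp Require Import all_boot all_order all_algebra.
From mathcomp Require Import all_classical all_reals all_analysis.
From mathcomp Require Import ring lra.
Set Implicit Arguments. Unset Strict Implicit. Unset Printing Implicit Defensive.
Import Order.TTheory GRing.Theory Num.Theory.
Import numFieldNormedType.Exports.
Local Open Scope classical_set_scope.
Local Open Scope ring_scope.

Definition ext_ord T m (h : 'I_m -> T) (x : T) : 'I_m.+1 -> T :=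
  fun i => if unlift ord_max i is Some j then h j else x.

Lemma pick_injective_or_cover T (C : set T) (x0 : T) : C x0 -> forall m,
  (exists h : 'I_m.+1 -> T, injective h /\ forall i, C (h i)) \/
  (exists g : 'I_m -> T, (forall i, C (g i)) /\ C `<=` range g).
Proof.
move=> Cx0; have ext_lift m (h : 'I_m -> T) x j : ext_ord h x (lift ord_max j) = h j.
  by rewrite /ext_ord liftK.
have ext_max m (h : 'I_m -> T) x : ext_ord h x ord_max = x by rewrite /ext_ord unlift_none.
have ext_in m (h : 'I_m -> T) x i : (forall j, C (h j)) -> C x -> C (ext_ord h x i).
  by move=> hC Cx; rewrite /ext_ord; case: unlift.
elim=> [|m [[h [hinj hC]]|[g [gC Cg]]]].
- by left; exists (fun=> x0); split => // i j _; rewrite !ord1.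
- have [Ch|/existsNP[x /not_implyP[Cx xh]]] := pselect (C `<=` range h).
    by right; exists h.
  left; exists (ext_ord h x); split => [i j|i]; last exact: ext_in.
  case: (unliftP ord_max i) => [i' ->|->]; case: (unliftP ord_max j) => [j' ->|->];
    rewrite ?ext_lift ?ext_max //.
  + by move/hinj ->.
  + by move=> hix; exfalso; apply: xh; exists i'.
  + by move=> hxj; exfalso; apply: xh; exists j'.
- right; exists (ext_ord g x0); split => [i|x /Cg[j _ <-]]; first exact: ext_in.
  by exists (lift ord_max j); rewrite ?ext_lift.
Qed.

Lemma exists_natSinv_lt (R : realType) (d : R) : 0 < d -> exists k : nat, k.+1%:R^-1 < d.
Proof.
move=> d0; exists (Num.truncn d^-1).
rewrite -[ltRHS]invrK ltf_pV2 ?posrE ?invr_gt0 ?ltr0n //.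
exact: truncnS_gt.
Qed.

Lemma klipschitz_continuous (R : realType) (V : normedModType R) (f : V -> R) (k : R) :
  (forall x y, `|f x - f y| <= k * `|x - y|) -> continuous f.
Proof.
move=> fk x; apply/cvgrPdist_lt => e e0.
have k1 : 0 < `|k| + 1 by rewrite ltr_wpDl.
near=> y; apply: le_lt_trans (fk x y) _.
apply: (le_lt_trans (y := (`|k| + 1) * `|x - y|)).
  by rewrite ler_wpM2r // (le_trans (ler_norm k)) // lerDl.
rewrite mulrC -ltr_pdivlMr //; near: y.
by apply: cvgr_dist_lt => //; rewrite divr_gt0.
Unshelve. all: by end_near.
Qed.

Section ContinuousSublevel.
Variables (T : topologicalType) (R : realType) (g : T -> R) (c : R).
Hypothesis g_cont : continuous g.

Lemma continuous_closed_le : closed [set x | g x <= c].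
Proof. by apply: (@preimage_closed _ _ g [set y | y <= c]); [move=> ? _|exact: closed_le]. Qed.

Lemma continuous_closed_ge : closed [set x | c <= g x].
Proof. by apply: (@preimage_closed _ _ g [set y | c <= y]); [move=> ? _|exact: closed_ge]. Qed.

Lemma continuous_open_lt : open [set x | g x < c].
Proof. by apply: (@open_comp _ _ g [set y | y < c]); [move=> ? _|exact: open_lt]. Qed.

End ContinuousSublevel.

Lemma compact_nested_closed (T : topologicalType) (D : set T) (W : nat -> set T) :
  compact D -> (forall k, W k `<=` D) -> (forall k, closed (W k)) ->
  (forall k, W k !=set0) -> (forall i j, (i <= j)%N -> W j `<=` W i) ->
  exists p, forall k, W k p.
Proof.
move=> cD WD Wc Wn Wd.
have FW : Filter (filter_from setT W).
  apply: filter_from_filter; first by exists 0%N.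
  move=> i j _ _; exists (maxn i j) => // x Wx.
  by split; apply: Wd Wx; rewrite ?leq_maxl ?leq_maxr.
have PW : ProperFilter (filter_from setT W).
  by apply: filter_from_proper => i _; exact: Wn.
have [|p [_ clp]] := cD _ PW; first by exists 0%N.
exists p => k; apply: Wc => B Bp.
by apply: (clp (W k) B) => //; exists k.
Qed.

Lemma compact_increasing_cover (T : ptopologicalType) (K : set T) (U : nat -> set T) :
  compact K -> (forall k, open (U k)) -> (forall i j, (i <= j)%N -> U i `<=` U j) ->
  K `<=` \bigcup_k U k -> exists k, K `<=` U k.
Proof.
move=> cK Uo Umono KU; rewrite compact_cover in cK.
have [D _ KD] := cK nat setT U (fun k _ => Uo k) KU.
exists (\max_(k <- finmap.enum_fset D) k) => x /KD[k Dk]; apply: Umono.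
exact: (@leq_bigmax_seq nat _ xpredT id k Dk isT).
Qed.

Lemma bounded_norm_le (R : realType) n (A : set 'rV[R]_n) M :
  (forall x, A x -> `|x| <= M) -> bounded_set A.
Proof.
move=> AM; rewrite /bounded_near /=; near=> M' => x Ax /=.
apply: le_trans (AM x Ax) _; near: M'; apply: nbhs_pinfty_ge; exact: num_real.
Unshelve. all: by end_near.
Qed.

Lemma compact_unit_sphere_rV (R : realType) n : compact [set v : 'rV[R]_n | `|v| = 1].
Proof.
apply: bounded_closed_compact; first by apply: (@bounded_norm_le _ _ _ 1) => v ->.
apply: (@preimage_closed _ _ (Num.norm : 'rV[R]_n -> R) [set y | y = 1]).
  by move=> ? _; exact: norm_continuous.
exact: closed_eq.
Qed.

Section Dot.
Variables (R : realType) (n : nat).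
Implicit Types (u v w : 'rV[R]_n) (a : R).

Lemma rV_delta_neq0 j : delta_mx 0 j != 0 :> 'rV[R]_n.
Proof. by apply/eqP => /matrixP/(_ ord0 j); rewrite !mxE !eqxx => /eqP; rewrite oner_eq0. Qed.

Definition dot u v := \sum_(j < n) u ord0 j * v ord0 j.

Lemma dotC u v : dot u v = dot v u.
Proof. by apply: eq_bigr => j _; rewrite mulrC. Qed.

Lemma dotDl u v w : dot (u + v) w = dot u w + dot v w.
Proof. by rewrite /dot -big_split; apply: eq_bigr => j _; rewrite mxE mulrDl. Qed.

Lemma dotZl a u v : dot (a *: u) v = a * dot u v.
Proof. by rewrite /dot mulr_sumr; apply: eq_bigr => j _; rewrite mxE mulrA. Qed.

Lemma dotDr u v w : dot w (u + v) = dot w u + dot w v.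
Proof. by rewrite dotC dotDl !(dotC w). Qed.

Lemma dotZr a u v : dot v (a *: u) = a * dot v u.
Proof. by rewrite dotC dotZl dotC. Qed.

Lemma dotNr u v : dot v (- u) = - dot v u.
Proof. by rewrite -scaleN1r dotZr mulN1r. Qed.

Lemma dotBr u v w : dot w (u - v) = dot w u - dot w v.
Proof. by rewrite dotDr dotNr. Qed.

Lemma dot0r u : dot u 0 = 0.
Proof. by rewrite /dot big1 // => j _; rewrite mxE mulr0. Qed.

Lemma dot_delta u j : dot u (delta_mx 0 j) = u ord0 j.
Proof.
rewrite /dot (bigD1 j) //= big1 ?addr0 => [|k kj]; rewrite mxE.
  by rewrite !eqxx mulr1.
by rewrite (negbTE kj) mulr0.
Qed.

Lemma dot_ge0 u : 0 <= dot u u.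
Proof. by apply: sumr_ge0 => j _; rewrite -expr2 sqr_ge0. Qed.

Lemma dot_gt0 u : u != 0 -> 0 < dot u u.
Proof.
move=> u0; rewrite lt_def dot_ge0 andbT; apply: contra u0 => /eqP uu0.
apply/eqP/rowP => j; rewrite mxE; apply/eqP; rewrite -sqrf_eq0 expr2; apply/eqP.
by apply: (psumr_eq0P (P := predT) (F := fun j => u ord0 j * u ord0 j)) => // i _;
  rewrite -expr2 sqr_ge0.
Qed.

Lemma continuous_dotl v : continuous (dot^~ v).
Proof.
apply: continuous_big => [|j _]; first exact: add_continuous.
move=> w; apply: (@continuousM R _ (fun w : 'rV[R]_n => w ord0 j) (fun=> v ord0 j)).
  exact: coord_continuous.
exact: cst_continuous.
Qed.

Lemma continuous_dot_self : continuous (fun w => dot w w).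
Proof.
apply: continuous_big => [|j _]; first exact: add_continuous.
move=> w; apply: (@continuousM R _ (fun w : 'rV[R]_n => w ord0 j) (fun w => w ord0 j));
  exact: coord_continuous.
Qed.

Lemma linear_form_dot (g : 'rV[R]_n -> R) :
  (forall a u v, g (a *: u + v) = a * g u + g v) ->
  forall u, g u = dot (\row_j g (delta_mx 0 j)) u.
Proof.
move=> glin u; pose gL : {linear 'rV[R]_n -> R^o | *%R} :=
  HB.pack g (GRing.isLinear.Build _ _ _ _ g glin).
rewrite -[g]/(gL : _ -> _) {1}(row_sum_delta u) linear_sum dotC.
by apply: eq_bigr => j _; rewrite linearZ mxE.
Qed.

Lemma common_nonpos_direction (V : 'I_n -> 'rV[R]_n) : (0 < n)%N ->
  exists2 u, u != 0 & forall i, dot (V i) u <= 0.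
Proof.
move=> n_gt0; pose M : 'M[R]_n := \matrix_(j, i) V i ord0 j.
have MdotE u i : (u *m M) ord0 i = dot (V i) u.
  by rewrite !mxE dotC; apply: eq_bigr => j _; rewrite mxE.
have [/eqP/det0P [u u0 uM]|detM] := eqVneq (\det M) 0.
  by exists u => // i; rewrite -MdotE uM mxE.
have Mu : M \in unitmx by rewrite unitmxE unitfE.
pose m1 : 'rV[R]_n := const_mx (-1).
have m10 : m1 != 0.
  apply/eqP => /matrixP /(_ ord0 (Ordinal n_gt0)); rewrite !mxE => /eqP.
  by rewrite oppr_eq0 oner_eq0.
exists (m1 *m invmx M) => [|i]; last by rewrite -MdotE mulmxKV // mxE lerN10.
by apply: contra m10 => /eqP m1M0; rewrite -(mulmxKV Mu m1) m1M0 mul0mx.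
Qed.

End Dot.

Section ConvexSeparation.
Variables (R : realType) (n : nat).
Implicit Types (K : set 'rV[R]_n) (u v y : 'rV[R]_n).

Definition convex_rV K :=
  forall x y t, K x -> K y -> 0 <= t <= 1 -> K (x + t *: (y - x)).

Lemma convex_min_dot K : K !=set0 -> compact K -> convex_rV K ->
  exists2 q, K q & forall y, K y -> dot q q <= dot q y.
Proof.
move=> K0 cK Kconv.
have [q /set_mem Kq qmin] :=
  EVT_min_rV K0 cK (continuous_subspaceT (@continuous_dot_self R n)).
exists q => // y Ky; rewrite -subr_ge0 -dotBr leNgt; apply/negP => qyq.
(* stepping from q towards y by t = al / (be + al) would decrease [dot _ _] *)
set al := - dot q (y - q); set be := dot (y - q) (y - q).
have al0 : 0 < al by rewrite oppr_gt0.
have be0 : 0 <= be by exact: dot_ge0.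
have bea : 0 < be + al by rewrite ltr_wpDl.
set t := al / (be + al).
have t0 : 0 < t by rewrite divr_gt0.
have teq : t * (be + al) = al by rewrite /t mulfVK // gt_eqF.
have t1 : t <= 1 by rewrite /t ler_pdivrMr // mul1r lerDr.
have /qmin : q + t *: (y - q) \in K by apply/mem_set/Kconv; rewrite ?(ltW t0).
rewrite !dotDl !dotDr !dotZl !dotZr (dotC (y - q) q) -/be.
have -> : dot q (y - q) = - al by rewrite opprK.
clearbody t al be; nra.
Qed.

Lemma open_exhaustion_halfspace (U : set 'rV[R]_n) (K : nat -> set 'rV[R]_n) :
  open U -> U `<=` \bigcup_k K k -> (forall i j, (i <= j)%N -> K i `<=` K j) ->
  (forall k, K k !=set0) -> (forall k, compact (K k)) -> (forall k, convex_rV (K k)) ->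
  (forall k, ~ K k 0) ->
  exists v, forall y, U y -> 0 < dot v y.
Proof.
move=> Uo UK Kmono K0 cK Kconv K_0.
pose S := [set v : 'rV[R]_n | `|v| = 1].
(* unit normals of half-spaces containing K k; the nearest point of K k to 0
   provides one, and a common one for all k is found by compactness *)
pose V k := [set v | S v /\ forall y, K k y -> 0 <= dot v y].
have cS : compact S := @compact_unit_sphere_rV R n.
have Vcl k : closed (V k).
  have -> : V k = S `&` \bigcap_(y in K k) [set v | 0 <= dot v y].
    by apply/seteqP; split => v /= [].
  apply: closedI; first exact: compact_closed.
  apply: closed_bigI => y _.
  by apply: continuous_closed_ge; exact: continuous_dotl.
have Vne k : V k !=set0.
  have [q Kq qmin] := convex_min_dot (K0 k) (cK k) (Kconv k).
  have q0 : q != 0 by apply: contraPneq (K_0 k) => <-.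
  have nq : 0 < `|q| by rewrite normr_gt0.
  exists (`|q|^-1 *: q); split; first by rewrite /S /= normrZ normfV normr_id mulVf ?gt_eqF.
  move=> y Ky; rewrite dotZl mulr_ge0 ?invr_ge0 ?ltW //.
  exact: lt_le_trans (dot_gt0 q0) (qmin y Ky).
have Vnest i j : (i <= j)%N -> V j `<=` V i.
  by move=> ij v [Sv vK]; split => // y /(Kmono _ _ ij); exact: vK.
have VS k : V k `<=` S by move=> v [].
have [v vV] := compact_nested_closed cS VS Vcl Vne Vnest.
have v1 : `|v| = 1 by case: (vV 0%N).
have v_ge0 y : U y -> 0 <= dot v y by move=> /UK[k _ Kky]; case: (vV k) => _; apply.
exists v => y Uy; rewrite lt_def v_ge0 // andbT; apply/negP => /eqP vy0.
(* U is open, so it also contains y - e v, where [dot v] is negative *)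
have /nbhs_ballP[e e0 yeU] : nbhs y U by rewrite nbhsE; exists U.
have /v_ge0 : U (y - (e / 2) *: v).
  apply: yeU; rewrite -ball_normE /= opprB addrC subrK normrZ v1 mulr1.
  by rewrite gtr0_norm ?divr_gt0 // ltr_pdivrMr // ltr_pMr // ltr1n.
rewrite dotBr vy0 dotZr sub0r oppr_ge0 leNgt; apply/negP/negPn.
by rewrite mulr_gt0 ?divr_gt0 // dot_gt0 // -normr_gt0 v1.
Qed.

End ConvexSeparation.

(* Continuity and domination of the sup-norm hold for every norm on R^n, but are
   assumed here: they are only established for the transported norm. *)
Definition rV_norm (R : realType) n (N : 'rV[R]_n -> R) :=
  [/\ forall a u, N (a *: u) = `|a| * N u, forall u v, N (u + v) <= N u + N v,
      continuous N & exists2 c, 0 < c & forall u, c * `|u| <= N u].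

Section RowNorm.
Variables (R : realType) (n : nat) (N : 'rV[R]_n -> R).
Hypothesis N_norm : rV_norm N.
Implicit Types (g u v w y xi : 'rV[R]_n).

Let NZ a u : N (a *: u) = `|a| * N u. Proof. by case: N_norm. Qed.
Let ND u v : N (u + v) <= N u + N v. Proof. by case: N_norm. Qed.
Let N_cont : continuous N. Proof. by case: N_norm. Qed.
Let N_coercive : exists2 c, 0 < c & forall u, c * `|u| <= N u.
Proof. by case: N_norm. Qed.

Lemma N0 : N 0 = 0.
Proof. by rewrite -(scale0r (0 : 'rV[R]_n)) NZ normr0 mul0r. Qed.

Lemma NN u : N (- u) = N u.
Proof. by rewrite -scaleN1r NZ normrN1 mul1r. Qed.

Lemma N_ge0 u : 0 <= N u.
Proof. by have := ND u (- u); rewrite subrr N0 NN; lra. Qed.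

Lemma N_gt0 u : u != 0 -> 0 < N u.
Proof.
move=> u0; have [c c0 cN] := N_coercive.
by apply: lt_le_trans (cN u); rewrite mulr_gt0 // normr_gt0.
Qed.

Lemma continuous_N_sub g : continuous (fun y => N (g - y)).
Proof.
move=> y; apply: continuous_comp; last exact: N_cont.
by apply: continuousB; [exact: cst_continuous | exact: cvg_id].
Qed.

Lemma compact_N_ball g t : compact [set y | N (g - y) <= t].
Proof.
have [c c0 cN] := N_coercive.
apply: bounded_closed_compact; last by apply: continuous_closed_le; exact: continuous_N_sub.
apply: (@bounded_norm_le _ _ _ ((N g + t) / c)) => y gyt.
rewrite ler_pdivlMr // mulrC; apply: le_trans (cN y) _.
have := ND g (- (g - y)); rewrite NN opprB addrCA subrr addr0 => /le_trans; apply.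
by rewrite lerD2l.
Qed.

Lemma convex_N_ball g t : convex_rV [set y | N (g - y) <= t].
Proof.
move=> x y s /= gxt gyt /andP[s0 s1].
have -> : g - (x + s *: (y - x)) = (1 - s) *: (g - x) + s *: (g - y).
  by apply/rowP => j; rewrite !mxE; ring.
apply: le_trans (ND _ _) _; rewrite !NZ !ger0_norm ?subr_ge0 //; nra.
Qed.

Lemma N_ball_halfspace g r : 0 < r -> r <= N g ->
  exists v, forall y, N (g - y) < r -> 0 < dot v y.
Proof.
move=> r0 rg; pose rho k := 1 - k.+1%:R^-1 : R.
have rho_ge0 k : 0 <= rho k by rewrite subr_ge0 invf_le1 ?ler1n.
have rho_lt1 k : rho k < 1 by rewrite gtrBl invr_gt0.
apply: (@open_exhaustion_halfspace _ _ _ (fun k => [set y | N (g - y) <= rho k * r])).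
- by apply: continuous_open_lt; exact: continuous_N_sub g.
- move=> y gyr; have [k kgy] : exists k : nat, k.+1%:R^-1 < (r - N (g - y)) / r.
    by apply: exists_natSinv_lt; rewrite divr_gt0 // subr_gt0.
  exists k => //=; move: kgy; rewrite ltr_pdivlMr // /rho mulrBl mul1r.
  by set t := _ * r; lra.
- move=> i j ij y /= /le_trans; apply; rewrite ler_wpM2r ?(ltW r0) // /rho lerD2l lerN2.
  by rewrite lef_pV2 ?posrE // ler_nat.
- by move=> k; exists g; rewrite /= subrr N0 mulr_ge0 ?(ltW r0).
- by move=> k; exact: compact_N_ball.
- by move=> k; exact: convex_N_ball.
- move=> k /=; rewrite subr0; apply/negP; rewrite -ltNge.
  by apply: lt_le_trans rg; rewrite gtr_pMl.
Qed.

Lemma dual_norm_attained a : a != 0 ->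
  exists xi, [/\ N xi = 1, 0 < dot a xi & forall u, dot a u <= dot a xi * N u].
Proof.
move=> a0; pose B := [set u | N u <= 1].
have cB : compact B.
  rewrite (_ : B = [set y | N (0 - y) <= 1]); first exact: compact_N_ball.
  by apply/seteqP; split => u /=; rewrite sub0r NN.
have B0 : B 0 by rewrite /B /= N0.
have [xi /set_mem Bxi ximax] :=
  EVT_max_rV (ex_intro _ 0 B0) cB (continuous_subspaceT (continuous_dotl (v := a))).
have dot_le u : u != 0 -> dot a u <= dot a xi * N u.
  move=> u0; have Nu := N_gt0 u0.
  have /ximax : (N u)^-1 *: u \in B.
    by apply/mem_set; rewrite /B /= NZ gtr0_norm ?invr_gt0 // mulVf ?gt_eqF.
  by rewrite !(dotC _ a) dotZr ler_pdivrMl // mulrC.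
have axi : 0 < dot a xi.
  rewrite -(pmulr_lgt0 _ (N_gt0 a0)).
  exact: lt_le_trans (dot_gt0 a0) (dot_le a a0).
exists xi; split => // [|u]; last first.
  by have [->|/dot_le//] := eqVneq u 0; rewrite dot0r N0 mulr0.
apply/eqP; rewrite eq_le Bxi /=; have xi0 : xi != 0.
  by apply: contraTneq axi => ->; rewrite dot0r ltxx.
by have := dot_le xi xi0; rewrite -{1}[dot a xi]mulr1 ler_pM2l.
Qed.

Definition dual_ball := [set w | forall v, dot w v <= N v].

Lemma dual_ball_norm_le w v : dual_ball w -> `|dot w v| <= N v.
Proof. by move=> Dw; rewrite ler_norml Dw andbT lerNl -dotNr -(NN v) Dw. Qed.

Lemma compact_dual_ball : compact dual_ball.
Proof.
pose box := [set w : 'rV[R]_n | forall j, `[- N (delta_mx 0 j), N (delta_mx 0 j)]%classic (w ord0 j)].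
apply: (@subclosed_compact _ _ box).
- have -> : dual_ball = \bigcap_v [set w | dot w v <= N v].
    by apply/seteqP; split => w /= Dw v; [move=> _ |]; apply: Dw.
  apply: closed_bigI => v _.
  by apply: continuous_closed_le; exact: continuous_dotl v.
- apply: (rV_compact (A := fun j => `[- N (delta_mx 0 j), N (delta_mx 0 j)]%classic)).
  by move=> j; exact: segment_compact.
- move=> w Dw j /=; rewrite in_itv /= -ler_norml -dot_delta.
  exact: dual_ball_norm_le.
Qed.

Lemma N_ray_mono xi u (t T : R) : N xi = 1 -> t <= T ->
  N (t *: xi - u) < t -> N (T *: xi - u) < T.
Proof.
move=> Nxi tT txi; have -> : T *: xi - u = (t *: xi - u) + (T - t) *: xi.
  by apply/rowP => j; rewrite !mxE; ring.
apply: le_lt_trans (ND _ _) _; rewrite NZ Nxi mulr1 ger0_norm ?subr_ge0 //; lra.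
Qed.

Lemma compact_in_ray_balls m (xi : 'I_m -> 'rV[R]_n) (K : set 'rV[R]_n) :
  compact K -> (forall i, N (xi i) = 1) ->
  (forall u, K u -> exists i, exists2 s, 0 < s & N (xi i - s *: u) < 1) ->
  exists T : nat, forall u, K u -> exists i, N (T%:R *: xi i - u) < T%:R.
Proof.
move=> cK Nxi Kxi.
pose U (T : nat) := [set u | exists i, N (T%:R *: xi i - u) < T%:R].
suff [T KT] : exists T, K `<=` U T by exists T.
apply: compact_increasing_cover cK _ _ _.
- move=> T; have -> : U T = \bigcup_i [set u | N (T%:R *: xi i - u) < T%:R].
    by apply/seteqP; split => u /= [i]; exists i.
  by apply: bigcup_open => i _; apply: continuous_open_lt; exact: continuous_N_sub _.
- move=> S T ST u [i Si]; exists i; apply: N_ray_mono Si => //.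
  by rewrite ler_nat.
- move=> u /Kxi[i [s s0 Nsu]]; exists (Num.truncn s^-1).+1 => //; exists i.
  apply: (@N_ray_mono _ _ s^-1); first exact: Nxi i.
    exact/ltW/truncnS_gt.
  have -> : s^-1 *: xi i - u = s^-1 *: (xi i - s *: u).
    by rewrite scalerBr scalerA mulVf ?gt_eqF // scale1r.
  by rewrite NZ gtr0_norm ?invr_gt0 // gtr_pMr ?invr_gt0.
Qed.

End RowNorm.

Section SimplexDirections.
Variables (R : realType) (n : nat).

Definition simplex_dir (i : 'I_n.+1) : 'rV[R]_n :=
  if unlift ord_max i is Some j then delta_mx 0 j else - const_mx 1.

Lemma simplex_dir_neq0 i : (0 < n)%N -> simplex_dir i != 0.
Proof.
move=> n_gt0; rewrite /simplex_dir; case: unlift => [j|]; first exact: rV_delta_neq0.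
apply/eqP => /matrixP/(_ ord0 (Ordinal n_gt0)); rewrite !mxE => /eqP.
by rewrite oppr_eq0 oner_eq0.
Qed.

Lemma simplex_dir_pos u : u != 0 -> exists i, 0 < dot (simplex_dir i) u.
Proof.
move=> u0; apply: contrapT => no_pos; have u_le0 i : dot (simplex_dir i) u <= 0.
  by rewrite leNgt; apply/negP => pos; apply: no_pos; exists i.
have uj_le0 j : u ord0 j <= 0.
  by have := u_le0 (lift ord_max j); rewrite /simplex_dir liftK dotC dot_delta.
have sum_u : \sum_j - u ord0 j = 0.
  apply/eqP; rewrite eq_le sumr_ge0 => [|j _]; last by rewrite oppr_ge0.
  have := u_le0 ord_max; rewrite /simplex_dir unlift_none andbT.
  by rewrite /dot (eq_bigr (fun j => - u ord0 j)) // => j _; rewrite !mxE mulN1r.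
move/negP: u0; apply; apply/eqP/rowP => j; rewrite mxE; apply/eqP; rewrite -oppr_eq0.
by apply/eqP; move/psumr_eq0P: sum_u; apply => // k _; rewrite oppr_ge0.
Qed.

End SimplexDirections.

Section NormedSpace.
Variables (R : realType) (X : normedModType R).

Lemma dual_unit_norm_le (f : X -> R) x : dual_unit f -> `|f x| <= `|x|.
Proof.
move=> [flin [_ f_sup]].
pose fL : {linear X -> R^o | *%R} := HB.pack f (GRing.isLinear.Build _ _ _ _ f flin).
have f0 : f 0 = 0 := linear0 fL.
have fZ a y : f (a *: y) = a * f y := scalarZ fL a y.
set S := [set `|f y| | y in _] in f_sup.
have f_ub : ubound S 1.
  rewrite -[X in ubound _ X]f_sup; apply: sup_upper_bound; apply: contrapT => no_sup.
  by move: f_sup; rewrite sup_out // => /eqP; rewrite eq_sym oner_eq0.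
have [->|x0] := eqVneq x 0; first by rewrite f0 !normr0.
have nx : 0 < `|x| by rewrite normr_gt0.
have : `|f (`|x|^-1 *: x)| <= 1.
  by apply: f_ub; exists (`|x|^-1 *: x); rewrite //= normrZ normfV normr_id mulVf ?gt_eqF.
by rewrite fZ normrM normfV normr_id ler_pdivrMl // mulr1.
Qed.

Lemma dual_unit_of_norming (f : X -> R) x0 :
  (forall a u v, f (a *: u + v) = a * f u + f v) ->
  (forall x, `|f x| <= `|x|) -> `|x0| = 1 -> f x0 = 1 -> dual_unit f.
Proof.
move=> flin f_le nx0 fx0.
pose fL : {linear X -> R^o | *%R} := HB.pack f (GRing.isLinear.Build _ _ _ _ f flin).
split => //; split.
  apply: (@klipschitz_continuous _ _ _ 1) => x y.
  have fB y z : f (y - z) = f y - f z := linearB fL y z.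
  by rewrite mul1r -fB; exact: f_le.
set S := [set `|f x| | x in _].
have S1 : S 1 by exists x0; rewrite /= ?nx0 ?fx0 ?normr1.
have ub1 : ubound S 1 by move=> _ [x /= x1 <-]; exact: le_trans (f_le x) x1.
apply/eqP; rewrite eq_le ge_sup //=; last by exists 1.
by apply: sup_upper_bound => //; split; exists 1.
Qed.

Lemma oball_radius_inj (e c c' : X) (r r' : R) : e != 0 -> 0 < r -> 0 < r' ->
  oball c r = oball c' r' -> r = r'.
Proof.
move=> e0 r0 r'0; wlog rr' : c c' r r' r0 r'0 / r < r'.
  move=> W cc'; case: (ltgtP r r') => [rr'|r'r|//].
    exact: W c c' r r' r0 r'0 rr' cc'.
  exact/esym/(W c' c).
move=> cc'; exfalso.
(* a point of B(c', r') at distance (r + r') / 2 from c' on the far side from c *)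
have [d [e' [d0 e'1 cc'E]]] : exists d, exists e' : X, [/\ 0 <= d, `|e'| = 1 & c - c' = d *: e'].
  have [->|cc'0] := eqVneq c c'.
    exists 0, (`|e|^-1 *: e); rewrite subrr scale0r normrZ normfV normr_id.
    by rewrite mulVf ?normr_eq0.
  have nd : 0 < `|c - c'| by rewrite normr_gt0 subr_eq0.
  exists `|c - c'|, (`|c - c'|^-1 *: (c - c')); split; first exact: ltW.
    by rewrite normrZ normfV normr_id mulVf // gt_eqF.
  by rewrite scalerA mulfV ?gt_eqF // scale1r.
set s := (r + r') / 2.
have : oball c' r' (c' - s *: e').
  by rewrite /oball /= opprB addrC subrK normrZ e'1 mulr1 gtr0_norm /s; lra.
rewrite -cc' /oball /= (_ : c - (c' - s *: e') = (d + s) *: e').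
  by rewrite normrZ e'1 mulr1 ger0_norm /s; lra.
by rewrite opprB addrC -addrA (addrC (- c')) cc'E scalerDl addrC.
Qed.

End NormedSpace.

Section Coordinates.
Variables (R : realType) (X : normedModType R) (n : nat).
Variables (phi : {linear 'rV[R]_n -> X}) (psi : X -> 'rV[R]_n).
Hypotheses (phiK : cancel phi psi) (psiK : cancel psi phi) (n_gt0 : (0 < n)%N).
Implicit Types (u v w y xi : 'rV[R]_n).

Definition coord_norm u := `|phi u|.
Local Notation N := coord_norm.

Lemma psi_linear (a : R) (x y : X) : psi (a *: x + y) = a *: psi x + psi y.
Proof. by apply: (can_inj phiK); rewrite linearP !psiK. Qed.

Lemma coord_norm_psi (x : X) : N (psi x) = `|x|.
Proof. by rewrite /N psiK. Qed.

Lemma coord_norm_rV_norm : rV_norm N.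
Proof.
have N_cont : continuous N.
  have -> : N = (fun u => `|\sum_j u ord0 j *: phi (delta_mx 0 j)|).
    apply/funext => u; rewrite /N {1}(row_sum_delta u) linear_sum.
    by congr `|_|; apply: eq_bigr => j _; rewrite linearZ.
  move=> u; apply: continuous_comp; last exact: norm_continuous.
  apply: continuous_big => [|j _ w]; first exact: add_continuous.
  by apply: (@continuousZr_tmp _ _ _ (fun u : 'rV[R]_n => u ord0 j)); exact: coord_continuous.
split=> // [a u|u v|]; first by rewrite /N linearZ normrZ.
  by rewrite /N linearD ler_normD.
(* N attains a positive minimum on the compact unit sphere of the sup-norm *)
pose S := [set u : 'rV[R]_n | `|u| = 1].
have S0 : S !=set0.
  pose e : 'rV[R]_n := delta_mx 0 (Ordinal n_gt0).
  have e0 : e != 0 := rV_delta_neq0 R _.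
  by exists (`|e|^-1 *: e); rewrite /S /= normrZ normfV normr_id mulVf ?normr_eq0.
have [c /set_mem Sc cmin] :=
  EVT_min_rV S0 (@compact_unit_sphere_rV R n) (continuous_subspaceT N_cont).
have c0 : c != 0.
  by apply/eqP => c0; move: Sc; rewrite /S /= c0 normr0 => /eqP; rewrite eq_sym oner_eq0.
exists (N c) => [|u].
  rewrite normr_gt0; apply: contra c0 => /eqP phic0.
  by rewrite -[c]phiK phic0 -(linear0 phi) phiK.
have [->|u0] := eqVneq u 0; first by rewrite normr0 mulr0 normr_ge0.
have nu : 0 < `|u| by rewrite normr_gt0.
have /cmin : `|u|^-1 *: u \in S.
  by apply/mem_set; rewrite /S /= normrZ normfV normr_id mulVf ?gt_eqF.
by rewrite /N linearZ normrZ normfV normr_id ler_pdivlMl // mulrC.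
Qed.

Let N_norm := coord_norm_rV_norm.

Lemma coord_norm_gt0 u : u != 0 -> 0 < N u.
Proof. exact: N_gt0 N_norm u. Qed.

Lemma oball_halfspace c r : 0 < r -> r <= `|c| ->
  exists v, forall y, oball c r (phi y) -> 0 < dot v y.
Proof.
move=> r0 rc; have [|v vpos] := N_ball_halfspace N_norm (g := psi c) r0.
  by rewrite coord_norm_psi.
by exists v => y; rewrite /oball /= -[c]psiK -linearB; exact: vpos.
Qed.

Lemma ball_covering_card (A : set X) :
  (forall x : X, x != 0 -> exists r : R, 0 < r /\ A (r *: x)) ->
  forall C, ball_covering A C ->
    exists f : 'I_n.+1 -> set X, injective f /\ forall i, C (f i).
Proof.
move=> A_rays C [C_balls A_C].
have ray u : u != 0 -> exists2 r, 0 < r & A (phi (r *: u)).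
  move=> u0; have [|r [r0 Aru]] := A_rays (phi u); last by exists r; rewrite ?linearZ.
  by rewrite -normr_gt0; exact: coord_norm_gt0.
have [re _ Are] := ray _ (rV_delta_neq0 R (Ordinal n_gt0)).
have [B0 CB0 _] := A_C _ Are.
have [//|[g [gC Cg]]] := pick_injective_or_cover CB0 n; exfalso.
have /choice[v vpos] : forall i, exists v, forall y, g i (phi y) -> 0 < dot v y.
  by move=> i; have [c [r [r0 [rc ->]]]] := C_balls _ (gC i); exact: oball_halfspace.
have [u u0 vu] := common_nonpos_direction v n_gt0.
have [r r0 Aru] := ray u u0; have [_ /Cg[i _ <-] giru] := A_C _ Aru.
by have := vpos i _ giru; rewrite dotZr pmulr_rgt0 // ltNge vu.
Qed.

Section Smooth.
Hypothesis X_smooth : smooth X.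

Lemma smooth_norming y : y != 0 -> exists2 w, dual_ball N w & dot w y = N y.
Proof.
move=> y0; have phiy0 : phi y != 0 by rewrite -normr_gt0; exact: coord_norm_gt0.
have [f [fdu [fy _]]] := X_smooth phiy0.
pose w := \row_j f (phi (delta_mx 0 j)).
have fw u : f (phi u) = dot w u.
  by apply: (linear_form_dot (g := f \o phi)) => a v1 v2 /=; rewrite linearP fdu.1.
exists w => [v|]; last by rewrite -fw fy.
by rewrite -fw; exact: le_trans (ler_norm _) (dual_unit_norm_le _ fdu).
Qed.

Lemma dual_unit_dot_psi w xi : N xi = 1 -> dual_ball N w -> dot w xi = 1 ->
  dual_unit (fun x => dot w (psi x)).
Proof.
move=> Nxi Dw wxi; apply: (@dual_unit_of_norming _ _ _ (phi xi)) => //.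
- by move=> a x1 x2; rewrite psi_linear dotDr dotZr.
- by move=> x; rewrite -coord_norm_psi; exact: dual_ball_norm_le.
- by rewrite phiK.
Qed.

Lemma smooth_norming_unique xi w w' : N xi = 1 ->
  dual_ball N w -> dot w xi = 1 -> dual_ball N w' -> dot w' xi = 1 ->
  forall u, dot w u = dot w' u.
Proof.
move=> Nxi Dw wxi Dw' w'xi u.
have phixi0 : phi xi != 0 by rewrite -normr_gt0 -/(N xi) Nxi.
have [f [_ [_ f_uniq]]] := X_smooth phixi0.
have fE w1 : dual_ball N w1 -> dot w1 xi = 1 -> dot w1 u = f (phi u).
  move=> Dw1 w1xi; rewrite -{1}(phiK u); apply: (f_uniq (fun x => dot w1 (psi x))).
    exact: dual_unit_dot_psi Nxi Dw1 w1xi.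
  by rewrite phiK w1xi -/(N xi) Nxi.
by rewrite (fE w) ?(fE w').
Qed.
Lemma smooth_norming_limit xi u : N xi = 1 ->
  (forall s, 0 < s -> 1 <= N (xi - s *: u)) ->
  exists w, [/\ dual_ball N w, dot w xi = 1 & dot w u <= 0].
Proof.
move=> Nxi no_desc; have Nu0 := N_ge0 N_norm u.
pose W (k : nat) := [set w | dual_ball N w /\
  1 - k.+1%:R^-1 * N u <= dot w xi /\ dot w u <= 0].
have WD k : W k `<=` dual_ball N by move=> w [].
have Wcl k : closed (W k).
  apply: closedI; first exact: compact_closed (compact_dual_ball N_norm).
  by apply: closedI; [apply: continuous_closed_ge | apply: continuous_closed_le];
    exact: continuous_dotl.
have Wnest i j : (i <= j)%N -> W j `<=` W i.
  move=> ij w [Dw [wxi wu]]; do 2!split => //; apply: le_trans wxi.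
  by rewrite lerD2l lerN2 ler_wpM2r // lef_pV2 ?posrE // ler_nat.
have Wne k : W k !=set0.
  (* a norming functional at xi - s u, for s = 1 / (k + 1) *)
  set s := k.+1%:R^-1 : R; have s0 : 0 < s by rewrite invr_gt0.
  have Ny := no_desc s s0.
  have [|w Dw] := smooth_norming (y := xi - s *: u).
    by apply: contraTneq Ny => ->; rewrite (N0 N_norm) ler10.
  rewrite dotBr dotZr => wy; exists w; split=> //.
  have wxi : dot w xi <= 1 by rewrite -Nxi; exact: Dw.
  have wu : - (s * N u) <= s * dot w u.
    by rewrite -mulrN ler_wpM2l ?(ltW s0) // lerNl -dotNr -(NN N_norm); exact: Dw.
  move: wy wu; set p := s * dot w u; set q := s * N u => wy wu.
  by split; [lra | rewrite -(pmulr_rle0 _ s0) -/p; lra].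
have [w wW] := compact_nested_closed (compact_dual_ball N_norm) WD Wcl Wne Wnest.
have [Dw [_ wu]] := wW 0%N; exists w; split=> //.
apply/eqP; rewrite eq_le -{1}Nxi Dw /= leNgt; apply/negP => wxi1.
have Nu1 : 0 < N u + 1 by rewrite ltr_wpDl.
have [k] : exists k : nat, k.+1%:R^-1 < (1 - dot w xi) / (N u + 1).
  by apply: exists_natSinv_lt; rewrite divr_gt0 ?subr_gt0.
rewrite ltr_pdivlMr // => hk; have [_ [wk _]] := wW k.
have : 0 < k.+1%:R^-1 :> R by rewrite invr_gt0.
by move: (k.+1%:R^-1) hk wk => t; nra.
Qed.

Lemma smooth_descent xi a u : N xi = 1 -> 0 < dot a xi ->
  (forall v, dot a v <= dot a xi * N v) -> 0 < dot a u ->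
  exists2 s, 0 < s & N (xi - s *: u) < 1.
Proof.
move=> Nxi axi a_le au; apply: contrapT => no_desc.
have [|w [Dw wxi wu]] := smooth_norming_limit (u := u) Nxi.
  by move=> s s0; rewrite leNgt; apply/negP => desc; apply: no_desc; exists s.
pose w' := (dot a xi)^-1 *: a.
have Dw' : dual_ball N w' by move=> v; rewrite /w' dotZl ler_pdivrMl.
have w'xi : dot w' xi = 1 by rewrite /w' dotZl mulVf ?gt_eqF.
move: wu; rewrite (smooth_norming_unique Nxi Dw wxi Dw' w'xi) /w' dotZl.
by rewrite leNgt pmulr_rgt0 ?invr_gt0 ?au.
Qed.

Lemma simplex_descent_points : exists xi : 'I_n.+1 -> 'rV[R]_n,
  (forall i, N (xi i) = 1) /\
  forall u, u != 0 -> exists i, exists2 s, 0 < s & N (xi i - s *: u) < 1.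
Proof.
have /choice[xi xiP] := fun i => dual_norm_attained N_norm (simplex_dir_neq0 R i n_gt0).
exists xi; split => [i|u /simplex_dir_pos[i ai]]; first by case: (xiP i).
by exists i; have [Nxi axi a_le] := xiP i; exact: smooth_descent Nxi axi a_le ai.
Qed.

Lemma smooth_ball_covering (A : set X) : norm_bounded A -> 0 < dist0 A ->
  exists f : 'I_n.+1 -> set X, injective f /\ ball_covering A (range f).
Proof.
move=> [M AM] d0; set d := dist0 A in d0.
have Ad a : A a -> d <= `|a|.
  by move=> Aa; apply: ge_inf; [exists 0 => _ [x _ <-] | exists a].
have [xi [Nxi xi_desc]] := simplex_descent_points.
pose K := [set u | d <= N u /\ N u <= M].
have cK : compact K.
  have N_cont : continuous N by case: N_norm.
  apply: (@subclosed_compact _ K [set y | N (0 - y) <= M]).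
  - by apply: closedI; [apply: continuous_closed_ge | apply: continuous_closed_le].
  - exact: compact_N_ball N_norm 0 M.
  - by move=> u [_ uM]; rewrite /= sub0r (NN N_norm).
have [T KT] : exists T : nat, forall u, K u -> exists i, N (T%:R *: xi i - u) < T%:R.
  apply: (compact_in_ray_balls N_norm cK Nxi) => u [du _]; apply: xi_desc.
  by apply: contraTneq du => ->; rewrite (N0 N_norm) -ltNge.
pose rad (i : 'I_n.+1) : R := (T + i).+1%:R.
have rad_gt0 i : 0 < rad i by rewrite ltr0n.
pose f i := oball (phi (rad i *: xi i)) (rad i).
have e0 : phi (xi ord0) != 0 by rewrite -normr_gt0 -/(N _) Nxi.
exists f; split.
  move=> i j /(oball_radius_inj e0 (rad_gt0 i) (rad_gt0 j))/eqP.
  by rewrite eqr_nat eqSS eqn_add2l => /eqP/val_inj.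
split=> [_ [i _ <-]|a Aa].
  exists (phi (rad i *: xi i)), (rad i); split; first exact: rad_gt0.
  by split=> //; rewrite linearZ normrZ -/(N _) Nxi mulr1 gtr0_norm ?rad_gt0.
have [|i Ti] := KT (psi a); first by rewrite /K /= coord_norm_psi; split; [exact: Ad | exact: AM].
exists (f i); first by exists i.
rewrite /f /oball /= -[a]psiK -linearB; apply: (N_ray_mono N_norm (Nxi i) _ Ti).
by rewrite ler_nat leqW // leq_addr.
Qed.

End Smooth.

End Coordinates.

Theorem mainTheorem7 (R : realType) (X : normedModType R) (n : nat)
  (hn : (0 < n)%N) (hdim : is_dim X n) (A : set X)
  (hbd : norm_bounded A) (h0 : ~ A 0)
  (hrad : forall x : X, x != 0 -> exists r : R, 0 < r /\ A (r *: x)) :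
  (forall C : set (set X), ball_covering A C ->
     exists f : 'I_n.+1 -> set X, injective f /\ (forall i, C (f i))) /\
  (smooth X -> 0 < dist0 A ->
     exists f : 'I_n.+1 -> set X, injective f /\ ball_covering A (range f)).
Proof.
have [phi0 [phi0_lin [psi phiK psiK]]] := hdim.
pose phi : {linear 'rV[R]_n -> X} := HB.pack phi0 (GRing.isLinear.Build _ _ _ _ phi0 phi0_lin).
split; first exact: (@ball_covering_card R X n phi psi phiK psiK hn A hrad).
by move=> X_smooth; exact: (@smooth_ball_covering R X n phi psi phiK psiK hn X_smooth A hbd).
Qed.
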